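(* Let $G$ be an lcsc group with Haar measure $m_G$, let $V\subset G$ be a compact symmetric neighbourhood of the identity generating $G$, and let $d_V$ be the associated word metric with balls $B_n=\{g: d_V(e,g)\le n\}=V^n$, $n\in\mathbb{N}$. Assume the doubling condition: there is $C_0$ with $m_G(B_{2n})\le C_0\, m_G(B_n)$ for all integers $n\ge 1$. Then there exist constants $\delta>0$ and $C>0$ such that $m_G(B_{n+1}\setminus B_n)\le C n^{-\delta} m_G(B_n)$ for all integers $n\ge 1$. In particular, the balls are asymptotically invariant under right translations: $\lim_{n\to\infty} m_G(B_ng\,\Delta\, B_n)/m_G(B_n)=0$ for every $g\in G$.
   Context: For a compact symmetric generating set $V$ (i.e. $V=V^{-1}$ and $\bigcup_n V^n=G$), $|g|_V=\min\{n: g\in V^n\}$ with $V^0=\{e\}$ and $V^n$ the set of $n$-fold products of elements of $V$; the word metric is $d_V(g,h)=|g^{-1}h|_V$, which is left-invariant. $\Delta$ denotes symmetric difference. *)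

From HB Require Import structures.
From mathcomp Require Import all_boot all_order all_algebra.
From mathcomp Require Import all_classical all_reals all_analysis.
Set Implicit Arguments. Unset Strict Implicit. Unset Printing Implicit Defensive.
Import Order.TTheory GRing.Theory Num.Theory numFieldNormedType.Exports.
Local Open Scope classical_set_scope. Local Open Scope ring_scope.

Definition lcsc_group (G : ptopologicalType) (mul : G -> G -> G) (inv : G -> G)
    (e : G) : Prop :=
  [/\ (forall x y z, mul x (mul y z) = mul (mul x y) z),
      (forall x, mul e x = x /\ mul x e = x),
      (forall x, mul (inv x) x = e /\ mul x (inv x) = e),
      continuous (fun p : G * G => mul p.1 p.2) /\ continuous inv &
      [/\ hausdorff_space G, locally_compact [set: G] & @second_countable G]].

Notation borel_of G := (g_sigma_algebraType (@open G)).

(* A left Haar measure on the Borel sets of [G]: a left-invariant Borel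
   measure that is finite on compact sets and positive on non-empty open
   sets (on an lcsc group such a measure is automatically Radon). *)
Definition haar_measure (R : realType) (G : ptopologicalType)
    (mul : G -> G -> G) (m : {measure set (borel_of G) -> \bar R}) : Prop :=
  [/\ (forall (g : G) (A : set (borel_of G)), measurable A ->
         m [set mul g x | x in A] = m A),
      (forall K : set G, compact K -> (m K < +oo)%E) &
      (forall U : set G, open U -> U !=set0 -> (0 < m U)%E)].

Fixpoint set_pow (G : Type) (mul : G -> G -> G) (e : G) (V : set G) (n : nat)
    : set G :=
  match n with
  | 0 => [set e]
  | n'.+1 => [set y | exists2 x, set_pow mul e V n' x & exists2 v, V v & y = mul x v]
  end.

Definition compact_sym_gen_nbhs (G : ptopologicalType) (mul : G -> G -> G)
    (inv : G -> G) (e : G) (V : set G) : Prop :=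
  [/\ compact V, (forall v, V v -> V (inv v)), nbhs e V &
      \bigcup_n set_pow mul e V n = [set: G]].

Definition symdiff (T : Type) (A B : set T) : set T := (A `\` B) `|` (B `\` A).

From HB Require Import structures.
From mathcomp Require Import all_boot all_order all_algebra.
From mathcomp Require Import all_classical all_reals all_analysis.
From mathcomp Require Import zify ring lra.
Import Order.TTheory GRing.Theory Num.Theory numFieldNormedType.Exports.
Local Open Scope classical_set_scope.
Local Open Scope ring_scope.
Set Implicit Arguments. Unset Strict Implicit. Unset Printing Implicit Defensive.

(* Write [b n] for the Haar measure of the word ball [B n = V ^ n].  Fix
   [1 <= r] and [4 r <= N], and take a maximal family of points of the annulus
   [B N \ B (N - r)] that are pairwise at word distance [> 6 r].  The [6 r]-balls
   around them cover the annulus, while suitable [r]-balls near them are pairwise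
   disjoint and lie in the inner annulus [B (N - r) \ B (N - 4 r)]; hence
   [b r (b N - b (N - r)) <= b (6 r) (b (N - r) - b (N - 4 r))].  Doubling gives
   [b (6 r) <= C^3 b r], so the outer annulus carries at most the fraction
   [theta = C^3 / (C^3 + 1) < 1] of [B N \ B (N - 4 r)].  Iterating over the
   scales [r, 4 r, 16 r, ...] yields [b N - b (N - r) <= theta ^ j b N] whenever
   [r 4 ^ j <= N].  The case [r = 1] is the polynomial bound with
   [delta = log_4 (1 / theta)], and [r = 2 k + 1] bounds [m (B n g \Delta B n)]
   for [g] in [B k], since that set lies in [B (n + k) \ B (n - k)]. *)

Section GroupLaws.
Variables (T : Type) (mul : T -> T -> T) (inv : T -> T) (e : T).
Hypothesis mulA : forall x y z, mul x (mul y z) = mul (mul x y) z.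
Hypothesis mul_unit : forall x, mul e x = x /\ mul x e = x.
Hypothesis mul_inverse : forall x, mul (inv x) x = e /\ mul x (inv x) = e.

Lemma mul1x x : mul e x = x. Proof. by case: (mul_unit x). Qed.
Lemma mulx1 x : mul x e = x. Proof. by case: (mul_unit x). Qed.
Lemma mulVx x : mul (inv x) x = e. Proof. by case: (mul_inverse x). Qed.
Lemma mulxV x : mul x (inv x) = e. Proof. by case: (mul_inverse x). Qed.

Lemma invxM x y : inv (mul x y) = mul (inv y) (inv x).
Proof.
have xyK : mul (mul x y) (mul (inv y) (inv x)) = e.
  by rewrite -mulA (mulA y) mulxV mul1x mulxV.
by rewrite -[inv (mul x y)]mulx1 -xyK mulA mulVx mul1x.
Qed.

Lemma invxK x : inv (inv x) = x.
Proof. by rewrite -[inv (inv x)]mulx1 -(mulVx x) mulA mulVx mul1x. Qed.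

Lemma invx1 : inv e = e.
Proof. by rewrite -[inv e]mul1x mulxV. Qed.

Lemma mulxK x y : mul (mul y x) (inv x) = y.
Proof. by rewrite -mulA mulxV mulx1. Qed.

Lemma mulKx x y : mul (inv x) (mul x y) = y.
Proof. by rewrite mulA mulVx mul1x. Qed.

Lemma mulxKV x y : mul (mul y (inv x)) x = y.
Proof. by rewrite -mulA mulVx mulx1. Qed.

End GroupLaws.

Section WordBalls.
Variables (T : Type) (mul : T -> T -> T) (inv : T -> T) (e : T) (V : set T).
Hypothesis mulA : forall x y z, mul x (mul y z) = mul (mul x y) z.
Hypothesis mul_unit : forall x, mul e x = x /\ mul x e = x.
Hypothesis mul_inverse : forall x, mul (inv x) x = e /\ mul x (inv x) = e.
Hypothesis V_sym : forall v, V v -> V (inv v).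
Hypothesis V_e : V e.

Local Notation B := (set_pow mul e V).
Local Notation mul1x := (mul1x mul_unit).
Local Notation mulx1 := (mulx1 mul_unit).
Local Notation mulxV := (mulxV mul_inverse).
Local Notation invxM := (invxM mulA mul_unit mul_inverse).
Local Notation invxK := (invxK mulA mul_unit mul_inverse).
Local Notation mulKx := (mulKx mulA mul_unit mul_inverse).
Local Notation mulxK := (mulxK mulA mul_unit mul_inverse).
Local Notation mulxKV := (mulxKV mulA mul_unit mul_inverse).

Lemma set_pow_add a b x y : B a x -> B b y -> B (a + b) (mul x y).
Proof.
move=> Bx; elim: b y => [|b IH] y /=; first by move=> ->; rewrite addn0 mulx1.
case=> y' By' [v Vv ->]; rewrite addnS; exists (mul x y'); first exact: IH.
by exists v; rewrite ?mulA.
Qed.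

Lemma set_pow_split a b z : B (a + b) z ->
  exists x y, [/\ B a x, B b y & z = mul x y].
Proof.
elim: b z => [|b IH] z; first by rewrite addn0 => Bz; exists z, e; rewrite mulx1.
rewrite addnS /= => -[z' /IH [x [y [Bx By ->]]] [v Vv ->]].
exists x, (mul y v); split; [by [] | by exists y => //; exists v | by rewrite mulA].
Qed.

Lemma sub_set_pow1 : V `<=` B 1.
Proof. by move=> v Vv; exists e => //; exists v; rewrite ?mul1x. Qed.

Lemma set_powS n : B n `<=` B n.+1.
Proof. by move=> x Bx; exists x => //; exists e; rewrite ?mulx1. Qed.

Lemma le_set_pow i j : (i <= j)%N -> B i `<=` B j.
Proof.
by move=> /subnK <-; elim: (j - i)%N => [|k IH] //= x /IH; apply: set_powS.
Qed.

Lemma set_pow_inv n x : B n x -> B n (inv x).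
Proof.
elim: n x => [|n IH] x /=; first by move=> ->; rewrite (invx1 mul_unit mul_inverse).
case=> x' /IH Bx' [v Vv ->]; rewrite invxM.
by apply: (@set_pow_add 1 n) => //; apply/sub_set_pow1/V_sym.
Qed.

Definition wball x n : set T := [set mul x y | y in set_pow mul e V n].

(* [B n (mul (inv x) y)] says that the word distance from [x] to [y] is at most [n]. *)
Lemma wballP x n y : wball x n y <-> B n (mul (inv x) y).
Proof.
split=> [[u Bu <-]|Bxy]; first by rewrite mulKx.
by exists (mul (inv x) y) => //; rewrite mulA mulxV mul1x.
Qed.

Lemma set_pow_dist_sym n x y : B n (mul (inv x) y) -> B n (mul (inv y) x).
Proof.
by move=> /set_pow_inv; rewrite invxM invxK.
Qed.

Lemma set_pow_dist_trans a b x y z :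
  B a (mul (inv x) y) -> B b (mul (inv y) z) -> B (a + b) (mul (inv x) z).
Proof.
move=> Bxy Byz; have := set_pow_add Bxy Byz.
by rewrite -mulA (mulA y) mulxV mul1x.
Qed.

Lemma wball_disjoint r z z' x x' :
  B (2 * r) (mul (inv z) x) -> B (2 * r) (mul (inv z') x') ->
  ~ B (6 * r) (mul (inv x) x') -> wball z r `&` wball z' r = set0.
Proof.
move=> Bzx Bz'x' Nxx'; apply/seteqP; split=> // y [/wballP Bzy /wballP Bz'y].
apply: Nxx'; have -> : (6 * r = (2 * r + r) + (r + 2 * r))%N by lia.
apply: (set_pow_dist_trans (y := y)).
  exact: set_pow_dist_trans (set_pow_dist_sym Bzx) Bzy.
exact: set_pow_dist_trans (set_pow_dist_sym Bz'y) Bz'x'.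
Qed.

Lemma annulus_inner_ball r N x : (4 * r <= N)%N -> (B N `\` B (N - r)) x ->
  exists2 z, wball z r `<=` B (N - r) `\` B (N - 4 * r) & B (2 * r) (mul (inv z) x).
Proof.
move=> rN [BNx NBx]; have : B ((N - 2 * r) + 2 * r) x by rewrite subnK //; lia.
case/set_pow_split => z [w [Bz Bw xE]]; exists z; last by rewrite xE mulKx.
move=> _ [u Bu <-]; split.
  have -> : (N - r = (N - 2 * r) + r)%N by lia.
  exact: set_pow_add.
move=> Bzu; apply: NBx; have -> : (N - r = (N - 4 * r) + (r + 2 * r))%N by lia.
have -> : x = mul (mul z u) (mul (inv u) w) by rewrite mulA mulxK.
by apply: set_pow_add => //; apply: set_pow_add => //; apply: set_pow_inv.
Qed.

Definition separated (A : set T) s k (f : nat -> T) :=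
  (forall i, (i < k)%N -> A (f i)) /\
  (forall i j, (i < k)%N -> (j < k)%N -> i != j -> ~ B s (mul (inv (f i)) (f j))).

Lemma separated_extend A s k f x : separated A s k f -> A x ->
    (forall i, (i < k)%N -> ~ B s (mul (inv (f i)) x)) ->
  separated A s k.+1 (fun i => if i == k then x else f i).
Proof.
move=> [Af sepf] Ax farx; have ltk i : (i < k.+1)%N -> i != k -> (i < k)%N.
  by rewrite ltnS leq_eqVlt => /orP[/eqP->|//]; rewrite eqxx.
split=> [i ik|i j ik jk ij]; first by case: eqVneq => [//|/(ltk _ ik)/Af].
case: (eqVneq i k) => [ei|/(ltk _ ik) {}ik]; case: (eqVneq j k) => [ej|/(ltk _ jk) {}jk].
- by rewrite ei ej eqxx in ij.
- by move=> /set_pow_dist_sym; apply: farx.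
- exact: farx.
- exact: sepf.
Qed.

Lemma maximal_separated_cover A s k f : separated A s k f ->
  (forall g, ~ separated A s k.+1 g) -> A `<=` \bigcup_(i < k) wball (f i) s.
Proof.
move=> sepf maxk x Ax; apply: contrapT => Nx; apply: (maxk _ (separated_extend sepf Ax _)).
by move=> i ik Bfx; apply: Nx; exists i => //; apply/wballP.
Qed.

Lemma symdiff_rtrans_sub g k n : B k g -> (k <= n)%N ->
  symdiff [set mul x g | x in B n] (B n) `<=` B (n + k) `\` B (n - k).
Proof.
move=> Bg kn y [[[x Bx <-] NBxg]|[Bny NBy]].
  split; first exact: set_pow_add.
  by move=> Bxg; apply: NBxg; apply: (le_set_pow _ Bxg); lia.
split; first by apply: (le_set_pow _ Bny); lia.
move=> Bmy; apply: NBy; exists (mul y (inv g)); last exact: mulxKV.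
have -> : n = (n - k + k)%N by lia.
by apply: set_pow_add => //; apply: set_pow_inv.
Qed.
End WordBalls.

Section HaarWordBalls.
Variables (R : realType) (G : ptopologicalType) (mul : G -> G -> G) (inv : G -> G)
  (e : G) (m : {measure set (borel_of G) -> \bar R}) (V : set G).
Hypothesis mulA : forall x y z, mul x (mul y z) = mul (mul x y) z.
Hypothesis mul_unit : forall x, mul e x = x /\ mul x e = x.
Hypothesis mul_inverse : forall x, mul (inv x) x = e /\ mul x (inv x) = e.
Hypothesis mul_continuous : continuous (fun p : G * G => mul p.1 p.2).
Hypothesis G_hausdorff : hausdorff_space G.
Hypothesis m_linv : forall (g : G) (A : set (borel_of G)), measurable A ->
  m [set mul g x | x in A] = m A.
Hypothesis m_compact_fin : forall K : set G, compact K -> (m K < +oo)%E.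
Hypothesis m_open_pos : forall U : set G, open U -> U !=set0 -> (0 < m U)%E.
Hypothesis V_compact : compact V.
Hypothesis V_sym : forall v, V v -> V (inv v).
Hypothesis V_nbhs : nbhs e V.

Local Notation B := (set_pow mul e V).
Local Notation wball := (wball mul e V).
Let V_e : V e := nbhs_singleton V_nbhs.
Local Notation le_set_pow := (le_set_pow mul_unit V_e).
Local Notation separated := (separated mul inv e V).
Local Notation symdiff_rtrans_sub := (symdiff_rtrans_sub mulA mul_unit mul_inverse V_sym V_e).
Local Notation maximal_separated_cover :=
  (maximal_separated_cover mulA mul_unit mul_inverse V_sym).
Local Notation annulus_inner_ball := (annulus_inner_ball mulA mul_unit mul_inverse V_sym).
Local Notation wball_disjoint := (wball_disjoint mulA mul_unit mul_inverse V_sym).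

Lemma compact_mul_setX (A C : set G) : compact A -> compact C ->
  compact ((fun p : G * G => mul p.1 p.2) @` (A `*` C)).
Proof.
move=> cA cC; apply: continuous_compact; last exact: compact_setX.
exact: continuous_subspaceT.
Qed.

Lemma compact_set_pow n : compact (B n).
Proof.
elim: n => [|n IH]; first exact: compact_set1.
have -> : B n.+1 = (fun p : G * G => mul p.1 p.2) @` (B n `*` V).
  apply/seteqP; split=> y /=; first by case=> x Bx [v Vv ->]; exists (x, v).
  by case=> -[x v] [/= Bx Vv] <-; exists x => //; exists v.
exact: compact_mul_setX.
Qed.

Lemma compact_wball x n : compact (wball x n).
Proof.
have -> : wball x n = (fun p : G * G => mul p.1 p.2) @` ([set x] `*` B n).
  apply/seteqP; split=> y /=; first by case=> z Bz <-; exists (x, z).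
  by case=> -[a z] [/= -> Bz] <-; exists z.
exact/compact_mul_setX/compact_set_pow/compact_set1.
Qed.

Lemma compact_set_pow_rtrans g n : compact [set mul y g | y in B n].
Proof.
have -> : [set mul y g | y in B n] = (fun p : G * G => mul p.1 p.2) @` (B n `*` [set g]).
  apply/seteqP; split=> y /=; first by case=> z Bz <-; exists (z, g).
  by case=> -[z a] [/= Bz ->] <-; exists z.
exact/compact_mul_setX/compact_set1/compact_set_pow.
Qed.

Lemma compact_measurable (K : set G) : compact K -> measurable (K : set (borel_of G)).
Proof.
move=> /(compact_closed G_hausdorff) cK; rewrite -[K]setCK.
by apply: measurableC; apply: sub_sigma_algebra; exact: closed_openC.
Qed.

Let measurable_set_pow n : measurable (B n : set (borel_of G)).
Proof. by apply: compact_measurable; apply: compact_set_pow. Qed.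

Let measurable_wball x n : measurable (wball x n : set (borel_of G)).
Proof. by apply: compact_measurable; apply: compact_wball. Qed.

#[local] Hint Resolve measurable_set_pow measurable_wball : core.

Definition vol n := fine (m (B n)).

Lemma measure_set_pow n : m (B n) = (vol n)%:E.
Proof. by rewrite fineK // ge0_fin_numE //; apply: m_compact_fin; apply: compact_set_pow. Qed.

Lemma vol_ge0 n : 0 <= vol n.
Proof. exact: fine_ge0. Qed.

Lemma le_vol : {homo vol : i j / (i <= j)%N >-> i <= j}.
Proof.
move=> i j ij; rewrite -lee_fin -!measure_set_pow.
by apply: le_measure; rewrite ?inE //; apply: le_set_pow.
Qed.

Lemma vol_gt0 n : (1 <= n)%N -> 0 < vol n.
Proof.
move=> n1; rewrite -lte_fin -measure_set_pow.
apply: (lt_le_trans (m_open_pos (@open_interior _ V) _)); first by exists e.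
apply: le_measure; rewrite ?inE //; first by apply: sub_sigma_algebra; exact: open_interior.
by move=> x /interior_subset /(sub_set_pow1 mul_unit); apply: le_set_pow.
Qed.

Lemma measure_wball x n : m (wball x n) = (vol n)%:E.
Proof. by rewrite /wball m_linv ?measure_set_pow. Qed.

Lemma measure_annulus i j : (i <= j)%N -> m (B j `\` B i) = (vol j - vol i)%:E.
Proof.
move=> ij; have Bj_fin : (m (B j) < +oo)%E.
  by apply: m_compact_fin; apply: compact_set_pow.
rewrite measureD // setIidr; last exact: le_set_pow.
by rewrite EFinB; congr (_ - _)%E; apply: measure_set_pow.
Qed.

Lemma separated_packing r N k f : (4 * r <= N)%N ->
    separated (B N `\` B (N - r)) (6 * r) k f ->
  vol r *+ k <= vol (N - r) - vol (N - 4 * r).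
Proof.
move=> rN [fA fsep].
have /choice [z zP] : forall i, exists z, (i < k)%N ->
    wball z r `<=` B (N - r) `\` B (N - 4 * r) /\ B (2 * r) (mul (inv z) (f i)).
  move=> i; have [ik|_] := ltnP i k; last by exists e.
  by have [z ? ?] := annulus_inner_ball rN (fA i ik); exists z.
pose F : nat -> set (borel_of G) := fun i => wball (z i) r.
have disj : trivIset `I_k F.
  move=> i j /= ik jk [y yij]; apply/eqP; apply: contrapT => /negP ij.
  have [_ Bzi] := zP i ik; have [_ Bzj] := zP j jk.
  by rewrite /F (wball_disjoint Bzi Bzj (fsep i j ik jk ij)) in yij.
have mU : measurable (\big[setU/set0]_(i < k) F i).
  by apply: bigsetU_measurable => i _; apply: measurable_wball.
rewrite -lee_fin -measure_annulus; last lia.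
have <- : m (\big[setU/set0]_(i < k) F i) = (vol r *+ k)%:E.
  rewrite measure_semi_additive_ord_I // => [|i _]; last exact: measurable_wball.
  by rewrite (eq_bigr _ (fun i _ => measure_wball _ _)) sumEFin sumr_const card_ord.
apply: le_measure; rewrite ?inE //; first by apply: measurableD.
by rewrite -bigcup_mkord => y [i ik]; have [+ _] := zP i ik; apply.
Qed.

Lemma separated_card_le r N k f : (1 <= r)%N -> (4 * r <= N)%N ->
  separated (B N `\` B (N - r)) (6 * r) k f -> (k <= Num.truncn (vol N / vol r))%N.
Proof.
move=> r1 rN /(separated_packing rN) packed; have vr := vol_gt0 r1.
rewrite leqNgt truncn_lt_nat ?divr_ge0 ?vol_ge0 // -leNgt ler_pdivlMr // mulr_natl.
apply: (le_trans packed); rewrite lerBlDr; apply: ler_wpDr; first exact: vol_ge0.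
by apply: le_vol; lia.
Qed.

Lemma annulus_cover r N : (1 <= r)%N -> (4 * r <= N)%N ->
  exists k f, separated (B N `\` B (N - r)) (6 * r) k f /\
    B N `\` B (N - r) `<=` \bigcup_(i < k) wball (f i) (6 * r).
Proof.
move=> r1 rN; pose P k := `[< exists f, separated (B N `\` B (N - r)) (6 * r) k f >].
have P0 : exists k, P k by exists 0%N; apply/asboolP; exists (fun=> e).
have Pub k : P k -> (k <= Num.truncn (vol N / vol r))%N.
  by move=> /asboolP [f]; apply: separated_card_le.
case: (ex_maxnP P0 Pub) => k /asboolP [f sepf] kmax.
exists k, f; split=> //; apply: maximal_separated_cover sepf _ => g sepg.
by have := kmax k.+1 (asboolT (ex_intro _ g sepg)); rewrite ltnn.
Qed.

Lemma annulus_vol_step r N : (1 <= r)%N -> (4 * r <= N)%N ->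
  vol r * (vol N - vol (N - r)) <= vol (6 * r) * (vol (N - r) - vol (N - 4 * r)).
Proof.
move=> r1 rN; have [k [f [sepf cover]]] := annulus_cover r1 rN.
pose F : nat -> set (borel_of G) := fun i => wball (f i) (6 * r).
have covered : vol N - vol (N - r) <= vol (6 * r) *+ k.
  rewrite -lee_fin -measure_annulus; last lia.
  apply: le_trans (content_subadditive m (F := F) _ _ _) _.
  - by move=> i _; apply: measurable_wball.
  - by apply: measurableD.
  - by rewrite -bigcup_mkord; apply: cover.
  by rewrite (eq_bigr _ (fun i _ => measure_wball _ _)) sumEFin sumr_const card_ord.
apply: le_trans (ler_wpM2l (vol_ge0 r) covered) _.
rewrite mulrnAr [vol r * _]mulrC -mulrnAr; apply: ler_wpM2l; first exact: vol_ge0.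
exact: separated_packing rN sepf.
Qed.

Lemma symdiff_rtrans_vol g k n : B k g -> (k <= n)%N ->
  fine (m (symdiff [set mul x g | x in B n] (B n))) <= vol (n + k) - vol (n - k).
Proof.
move=> Bg kn; pose S : set (borel_of G) := symdiff [set mul x g | x in B n] (B n).
have mS : measurable S.
  by apply: measurableU; apply: measurableD => //; apply: compact_measurable;
    apply: compact_set_pow_rtrans.
have le_S : (m S <= (vol (n + k) - vol (n - k))%:E)%E.
  rewrite -measure_annulus; last lia.
  by apply: le_measure; rewrite ?inE //; [apply: measurableD | apply: symdiff_rtrans_sub].
have S_fin : m S \is a fin_num by rewrite ge0_fin_numE // (le_lt_trans le_S) ?ltry.
exact: (fine_le S_fin _ le_S).
Qed.
End HaarWordBalls.

Lemma powR_ln_ratio (R : realType) (a t : R) : 1 < a -> 0 < t ->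
  a `^ (ln t / ln a) = t.
Proof.
move=> a1 t0; rewrite /powR gt_eqF ?(lt_trans _ a1) //.
by rewrite -mulrA mulVf ?mulr1 ?lnK ?posrE // gt_eqF // ln_gt0.
Qed.

Section DoublingSequence.
Variables (R : realType) (b : nat -> R) (C : R).
Hypothesis b_ge0 : forall n, 0 <= b n.
Hypothesis b_mono : {homo b : i j / (i <= j)%N >-> i <= j}.
Hypothesis b1_gt0 : 0 < b 1.
Hypothesis b_doubling : forall n, (1 <= n)%N -> b (2 * n) <= C * b n.
Hypothesis b_annulus : forall r N, (1 <= r)%N -> (4 * r <= N)%N ->
  b r * (b N - b (N - r)) <= b (6 * r) * (b (N - r) - b (N - 4 * r)).

Let b_gt0 n : (1 <= n)%N -> 0 < b n.
Proof. by move=> n1; apply: lt_le_trans b1_gt0 (b_mono n1). Qed.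

Lemma doubling_const_ge1 : 1 <= C.
Proof.
have : b 1 <= C * b 1 by apply: le_trans (b_mono _) (b_doubling _).
by rewrite -{1}[b 1]mul1r ler_pM2r.
Qed.

Let C_gt0 : 0 < C := lt_le_trans ltr01 doubling_const_ge1.
Let C_ge0 : 0 <= C := ltW C_gt0.

Lemma doubling_thrice n : (1 <= n)%N -> b (6 * n) <= C ^+ 3 * b n.
Proof.
move=> n1; have b8 : b (6 * n) <= b (2 * (2 * (2 * n))) by apply: b_mono; lia.
apply: (le_trans b8); rewrite !exprSr expr0 mul1r -!mulrA.
apply: le_trans (b_doubling _) _; first lia.
apply: ler_wpM2l => //; apply: le_trans (b_doubling _) _; first lia.
by apply: ler_wpM2l => //; apply: b_doubling.
Qed.

Definition contraction := C ^+ 3 / (C ^+ 3 + 1).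

Let K_ge1 : 1 <= C ^+ 3 := exprn_ege1 3 doubling_const_ge1.

Lemma contraction_gt0 : 0 < contraction.
Proof. by have K1 := K_ge1; rewrite divr_gt0 //; lra. Qed.

Let contraction_ge0 : 0 <= contraction := ltW contraction_gt0.

Lemma contraction_lt1 : contraction < 1.
Proof. by have K1 := K_ge1; rewrite /contraction ltr_pdivrMr; lra. Qed.

Lemma annulus_contraction r N : (1 <= r)%N -> (4 * r <= N)%N ->
  b N - b (N - r) <= contraction * (b N - b (N - 4 * r)).
Proof.
move=> r1 rN; have br := b_gt0 r1.
have inner_ge0 : 0 <= b (N - r) - b (N - 4 * r) by rewrite subr_ge0 b_mono //; lia.
have step : b N - b (N - r) <= C ^+ 3 * (b (N - r) - b (N - 4 * r)).
  rewrite -(ler_pM2l br) [b r * (C ^+ 3 * _)]mulrA [b r * C ^+ 3]mulrC.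
  apply: le_trans (b_annulus r1 rN) _.
  by apply: ler_wpM2r => //; apply: doubling_thrice.
have K1 := K_ge1; rewrite /contraction mulrC mulrA ler_pdivlMr; last lra.
by rewrite mulrDr mulr1; lra.
Qed.

Lemma annulus_decay j r N : (1 <= r)%N -> (r * 4 ^ j <= N)%N ->
  b N - b (N - r) <= contraction ^+ j * b N.
Proof.
elim: j r => [|j IH] r r1 rN; first by rewrite expr0 mul1r gerBl b_ge0.
have rN4 : (4 * r <= N)%N.
  by move: rN; rewrite expnS; have := expn_gt0 4 j; set x := (4 ^ j)%N; nia.
apply: (le_trans (annulus_contraction r1 rN4)); rewrite exprS -mulrA.
apply: ler_wpM2l => //.
by apply: IH; [lia | move: rN; rewrite expnS; set x := (4 ^ j)%N; nia].
Qed.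

Lemma increment_powR_bound : exists delta C', 0 < delta /\ 0 < C' /\
  forall n, (1 <= n)%N -> b n.+1 - b n <= C' * n%:R `^ (- delta) * b n.
Proof.
set t := contraction; have t0 := contraction_gt0; have t1 := contraction_lt1.
set delta := ln t^-1 / ln 4.
have delta0 : 0 < delta by rewrite divr_gt0 ?ln_gt0 ?invf_gt1 //; lra.
have four_delta : (4 : R) `^ delta = t^-1 by rewrite powR_ln_ratio ?invr_gt0 //; lra.
exists delta, (C / t); split=> //; split; first exact: divr_gt0.
move=> n n1; set j := trunc_log 4 n.+1.
have /andP[lo hi] := trunc_log_bounds (isT : (1 < 4)%N) (isT : (0 < n.+1)%N).
have decay : b n.+1 - b n <= t ^+ j * b n.+1.
  by have := @annulus_decay j 1 n.+1 (leqnn 1); rewrite mul1n subn1; apply.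
have bSn : b n.+1 <= C * b n by apply: le_trans (b_doubling n1); apply: b_mono; lia.
have n_delta : n%:R `^ delta <= t^-1 ^+ j.+1.
  rewrite -four_delta -powR_mulrn ?powR_ge0 // powRAC powR_mulrn ?ler0n // -natrX.
  apply: ge0_ler_powR; rewrite ?nnegrE ?ler0n ?ler_nat //; first exact: ltW.
  exact: ltnW (ltnW hi).
have tj : t ^+ j.+1 <= n%:R `^ (- delta).
  rewrite powRN -[_^-1]mul1r ler_pdivlMr ?powR_gt0 ?ltr0n //.
  apply: le_trans (ler_wpM2l (exprn_ge0 _ (ltW t0)) n_delta) _.
  by rewrite -exprMn mulfV ?gt_eqF // expr1n.
apply: (le_trans decay); apply: le_trans (ler_wpM2l (exprn_ge0 j (ltW t0)) bSn) _.
have -> : C / t * n%:R `^ (- delta) * b n = t^-1 * n%:R `^ (- delta) * (C * b n) by ring.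
rewrite ler_wpM2r ?mulr_ge0 // -[t ^+ j](mulKf (lt0r_neq0 t0)) -exprS.
by apply: ler_wpM2l tj; rewrite invr_ge0 ltW.
Qed.

Lemma rtrans_ratio_le k J n : ((2 * k + 1) * 4 ^ J <= n)%N ->
  0 <= (b (n + k) - b (n - k)) / b n <= contraction ^+ J * C.
Proof.
move=> kJn; have kn : (2 * k + 1 <= n)%N.
  by move: kJn; have := expn_gt0 4 J; set x := (4 ^ J)%N; nia.
have bn : 0 < b n by apply: b_gt0; lia.
rewrite divr_ge0 ?subr_ge0 ?b_mono ?ler_pdivrMr //=; last lia.
have wider : b (n + k) - b (n - k) <= b (n + k) - b (n + k - (2 * k + 1)).
  by rewrite lerD2l lerN2 b_mono //; lia.
apply: (le_trans wider); apply: le_trans (@annulus_decay J (2 * k + 1) (n + k) _ _) _.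
- by rewrite addn1.
- exact: leq_trans kJn (leq_addr _ _).
rewrite -mulrA; apply: ler_wpM2l; first exact: exprn_ge0.
by apply: le_trans (b_doubling _) => //; [apply: b_mono | ]; lia.
Qed.

Lemma rtrans_ratio_cvg k : (fun n => (b (n + k) - b (n - k)) / b n) @ \oo --> 0.
Proof.
apply/cvgrPdist_le => eps eps0.
have t_lt1 : `|contraction| < 1 by rewrite ger0_norm ?contraction_lt1.
have /cvgrPdist_le /(_ (eps / C) (divr_gt0 eps0 C_gt0)) [J _ tJ] := cvg_expr t_lt1.
exists ((2 * k + 1) * 4 ^ J)%N => // n /= kJn.
have /andP[ratio_ge0 ratio_le] := rtrans_ratio_le kJn.
rewrite sub0r normrN ger0_norm //; apply: (le_trans ratio_le).
rewrite -ler_pdivlMr //; have := tJ J (leqnn J).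
by rewrite /= sub0r normrN ger0_norm // exprn_ge0.
Qed.
End DoublingSequence.

Theorem theorem4p14 (R : realType) (G : ptopologicalType)
  (mul : G -> G -> G) (inv : G -> G) (e : G)
  (m : {measure set (borel_of G) -> \bar R}) (V : set G) :
  lcsc_group mul inv e ->
  haar_measure mul m ->
  compact_sym_gen_nbhs mul inv e V ->
  (exists C0 : R, forall n : nat, (1 <= n)%N ->
     (m (set_pow mul e V (2 * n)) <= C0%:E * m (set_pow mul e V n))%E) ->
  (exists (delta C : R), 0 < delta /\ 0 < C /\
     forall n : nat, (1 <= n)%N ->
       (m (set_pow mul e V n.+1 `\` set_pow mul e V n)
          <= (C * (n%:R `^ (- delta)))%:E * m (set_pow mul e V n))%E)
  /\
  (forall g : G,
     (fun n : nat =>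
        fine (m (symdiff [set mul x g | x in set_pow mul e V n]
                         (set_pow mul e V n)))
        / fine (m (set_pow mul e V n))) @ \oo --> (0 : R)).
Proof.
move=> [mulA mul_unit mul_inverse [mul_cont _] [G_haus _ _]] [m_linv m_fin m_pos]
  [V_cpt V_sym V_nbhs V_gen] [C0 m_doubling].
have b_mono := le_vol mul_unit mul_cont G_haus m_fin V_cpt V_nbhs.
have b1_gt0 := vol_gt0 mul_unit mul_cont G_haus m_fin m_pos V_cpt V_nbhs (leqnn 1).
have b_doubling n : (1 <= n)%N -> vol mul e m V (2 * n) <= C0 * vol mul e m V n.
  move=> n1; rewrite -lee_fin EFinM -!(measure_set_pow e mul_cont m_fin V_cpt).
  exact: m_doubling.
have b_annulus := annulus_vol_step mulA mul_unit mul_inverse mul_cont G_haus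
  m_linv m_fin m_pos V_cpt V_sym V_nbhs.
have b_ge0 := vol_ge0 mul e m V.
split.
  have [delta [C [delta0 [C_gt0 increment]]]] :=
    increment_powR_bound b_ge0 b_mono b1_gt0 b_doubling b_annulus.
  exists delta, C; do 2 split=> //; move=> n n1.
  rewrite (measure_annulus mul_unit mul_cont G_haus m_fin V_cpt V_nbhs (leqnSn n)).
  by rewrite (measure_set_pow e mul_cont m_fin V_cpt) -EFinM lee_fin increment.
move=> g; have [k _ Bkg] : (\bigcup_n set_pow mul e V n) g by rewrite V_gen.
apply: (squeeze_cvgr _ _ (rtrans_ratio_cvg b_ge0 b_mono b1_gt0 b_doubling b_annulus k));
  last exact: cvg_cst.
exists k => // n /= kn; rewrite divr_ge0 ?fine_ge0 ?b_ge0 //=.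
apply: ler_wpM2r; first by rewrite invr_ge0.
exact (symdiff_rtrans_vol mulA mul_unit mul_inverse mul_cont G_haus m_fin V_cpt
  V_sym V_nbhs Bkg kn).
Qed.
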